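(* Let $\Lambda$ be the double of a cellular decomposition of a compact oriented surface without boundary, with a discrete conformal structure $\rho$. For each pair of vertices $x,x'\in\Lambda_0$ joined by a simple path $\lambda$ in $\Lambda$ from $x$ to $x'$, there exists a unique pair of meromorphic $1$-forms $\alpha_{x,x'},\beta_{x,x'}$ on $\Lambda$ whose only poles are at $x$ and $x'$, with residues $+1$ at $x$ and $-1$ at $x'$, such that $\alpha_{x,x'}$ has purely imaginary holonomies and $\beta_{x,x'}$ has real holonomies along every loop in $\Lambda$ none of whose edges is dual to an edge of $\lambda$.
   Context: $\Lambda=\Gamma\sqcup\Gamma^*$ with $\Gamma$ a cellular decomposition and $\Gamma^*$ its Poincaré dual (dual edge $e^*$ for each edge $e$, dual face $v^*$ for each vertex $v$, $e^{**}=-e$); $\rho:\Lambda_1\to(0,\infty)$ with $\rho(e)\rho(e^* )=1$. Hodge star on 1-forms: $\int_e*\alpha=-\rho(e^* )\int_{e^*}\alpha$. A 1-form $\alpha$ is of type $(1,0)$ if $*\alpha=-i\alpha$. It is meromorphic with poles at a set of vertices if it is of type $(1,0)$, closed on every face $v^*$ of $\Lambda$ for $v$ not a pole, and not closed on $v^*$ for $v$ a pole; its residue at $v$ is $\mathrm{Res}_v(\alpha)=\frac{1}{2i\pi}\oint_{\partial v^*}\alpha$. The holonomy along a loop (closed edge-path) $\gamma$ is $\int_\gamma\alpha$. *)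

From HB Require Import structures.
From mathcomp Require Import all_boot all_order all_fingroup all_algebra.
From mathcomp Require Import complex.
From mathcomp Require Import reals trigo.

Set Implicit Arguments.
Unset Strict Implicit.
Unset Printing Implicit Defensive.

Import Order.TTheory GRing.Theory Num.Theory.
Local Open Scope ring_scope.

(* A cellular decomposition Gamma of a compact oriented surface without       *)
(* boundary is encoded as a combinatorial map (rotation system):              *)
(*   - D : finite set of darts (oriented edges),                             *)
(*   - s : D -> D, fixed-point-free involution (edge reversal, e |-> -e),     *)
(*   - phi : {perm D}, counterclockwise rotation of the darts around their    *)
(*     origin vertex.                                                          *)
(* Vertices of Gamma = phi-orbits (a dart d starts at the vertex of its        *)
(* orbit).  The face to the LEFT of a dart d is the orbit of d under           *)
(* psi := d |-> phi^-1 (s d)  (boundary of a face traversed counterclockwise). *)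
(* Every such data (with a transitive action) is a cellular decomposition of   *)
(* a closed connected oriented surface, and conversely.                        *)

Section Map.
Variables (D : finType) (s : D -> D) (phi : {perm D}).

Definition face_perm (d : D) : D := (phi^-1)%g (s d).

Definition is_cellular_map : Prop :=
  (forall d, s (s d) = d) /\ (forall d, s d != d) /\
  (forall d d', connect (fun a b => (b == phi a) || (b == s a)) d d').

(* Darts of the double Lambda = Gamma ⊔ Gamma^* :                              *)
(*   inl d = the dart d of Gamma (from its origin vertex to that of s d),       *)
(*   inr d = the dual dart d^* of Gamma^*, which crosses d from the face on     *)
(*           the right of d (face of s d) to the face on the left of d.         *)
Definition ldart := (D + D)%type.

Definition lrev (x : ldart) : ldart :=
  match x with inl d => inl (s d) | inr d => inr (s d) end.

(* duality  e |-> e^*  on Lambda ; one checks e^** = -e *)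
Definition lstar (x : ldart) : ldart :=
  match x with inl d => inr d | inr d => inl (s d) end.

(* two darts of Lambda have the same origin (a vertex of Lambda_0 =            *)
(* Gamma_0 ⊔ Gamma^*_0, the latter being the faces of Gamma)                    *)
Definition same_org (x y : ldart) : bool :=
  match x, y with
  | inl d, inl d' => fconnect phi d d'
  | inr d, inr d' => fconnect face_perm (s d) (s d')
  | _, _ => false
  end.

Definition conformal_structure (R : realType) (rho : ldart -> R) : Prop :=
  (forall x, rho (lrev x) = rho x) /\ (forall x, 0 < rho x) /\
  (forall x, rho x * rho (lstar x) = 1).

Section Forms.
Variables (R : realType).
Local Notation C := (complex R).

Definition realC (r : R) : C := Complex r 0.
Definition iC : C := Complex 0 1.

Definition one_form (a : ldart -> C) : Prop := forall x, a (lrev x) = - a x.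

Definition hodge (rho : ldart -> R) (a : ldart -> C) : ldart -> C :=
  fun x => - realC (rho (lstar x)) * a (lstar x).

Definition type10 (rho : ldart -> R) (a : ldart -> C) : Prop :=
  one_form a /\ forall x, hodge rho a x = - iC * a x.

(* contour integral of a along the boundary of the face v^* dual to the vertex *)
(* v = origin of x : for each dart y issuing from v, y^* runs counterclockwise  *)
(* along the boundary of v^*.                                                   *)
Definition contour (a : ldart -> C) (x : ldart) : C :=
  \sum_(y : ldart | same_org x y) a (lstar y).

Definition closed_at (a : ldart -> C) (x : ldart) : Prop := contour a x = 0.

Definition residue (a : ldart -> C) (x : ldart) : C :=
  (realC 2 * iC * realC pi)^-1 * contour a x.

(* a is meromorphic with poles exactly at the vertices (origins of darts)      *)
(* satisfying P (P is assumed to be a union of vertices)                         *)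
Definition meromorphic (rho : ldart -> R) (P : ldart -> bool) (a : ldart -> C)
  : Prop :=
  type10 rho a /\ (forall x, ~~ P x -> closed_at a x) /\
  (forall x, P x -> ~ closed_at a x).

Definition holonomy (a : ldart -> C) (g : seq ldart) : C := \sum_(y <- g) a y.

End Forms.

(* edge paths in Lambda : walk x p y  <=>  p = [e1; ...; en] is an edge path  *)
(* from the vertex of x to the vertex of y                                     *)
Fixpoint walk (x : ldart) (p : seq ldart) (y : ldart) : bool :=
  match p with
  | [::] => same_org x y
  | e :: p' => same_org x e && walk (lrev e) p' y
  end.

Definition simple_path (x : ldart) (p : seq ldart) (y : ldart) : bool :=
  walk x p y && pairwise (fun u v => ~~ same_org u v) (x :: map lrev p).

Definition loop (g : seq ldart) : Prop := exists z, walk z g z.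

Definition dual_edge (y e : ldart) : bool :=
  (y == lstar e) || (y == lrev (lstar e)).

Definition avoids_dual (lam g : seq ldart) : bool :=
  all (fun y => all (fun e => ~~ dual_edge y e) lam) g.

End Map.

(* A form of type (1,0) on the double is determined by its values [t] on the
   darts of the kind (primal or dual) of [x]: on the other kind it is [i rho t]
   composed with duality.  Closedness at the vertices of the kind of [x] says
   that [rho t] is divergence free, closedness at the other vertices that [t]
   is closed.

   Existence.  For alpha, [t] is the real gradient [dU] of a solution of the
   discrete Poisson equation [div (rho dU) = 2 pi (unit current along lam)];
   it is solvable because the weighted Laplacian [G diag(rho) G^T] has the same
   range as [G^T].  For beta, [t] is real again: the current along [lam] plus
   the dual gradient of the solution of a second Poisson equation, chosen so
   that [t] is closed.

   Uniqueness.  The difference [g] of two solutions is holomorphic.  [Re g] is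
   exact and coclosed.  [Im g] is closed and coclosed, and its Hodge dual is
   exact on the dual graph cut along [lam]; that graph stays connected since a
   divergence-free flow supported on a simple path vanishes.  In both cases a
   divergence-free weighted gradient has zero energy, hence vanishes. *)

From HB Require Import structures.
From mathcomp Require Import all_boot all_order all_fingroup all_algebra.
From mathcomp Require Import complex.
From mathcomp Require Import reals trigo.
From mathcomp Require Import boolp ring.

Set Implicit Arguments.
Unset Strict Implicit.
Unset Printing Implicit Defensive.

Import Order.TTheory GRing.Theory Num.Theory.
Local Open Scope ring_scope.

Lemma weighted_gram_row_space (R : realFieldType) m n (G : 'M[R]_(m, n)) (d : 'rV[R]_n) :
  (forall j, 0 < d 0 j) -> (G^T <= G *m diag_mx d *m G^T)%MS.
Proof.
move=> d_gt0; set L := G *m diag_mx d *m G^T.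
have kerL (w : 'rV[R]_m) : w *m L = 0 -> w *m G = 0.
  move=> wL0; set z := w *m G.
  have : \sum_j d 0 j * z 0 j ^+ 2 = 0.
    transitivity ((z *m diag_mx d *m z^T) 0 0).
      by rewrite mxE; apply: eq_bigr => j _; rewrite mul_mx_diag !mxE; ring.
    by move: wL0; rewrite /z /L trmx_mul !mulmxA => ->; rewrite mul0mx mxE.
  have ge0 j : 0 <= d 0 j * z 0 j ^+ 2 by rewrite mulr_ge0 ?sqr_ge0 ?ltW.
  move/(psumr_eq0P (fun j _ => ge0 j)) => z0; apply/rowP => j; rewrite [RHS]mxE.
  by move/eqP: (z0 j isT); rewrite mulf_eq0 (gt_eqF (d_gt0 j)) /= sqrf_eq0 => /eqP.
have kerL_sub : (kermx L <= kermx G)%MS.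
  rewrite sub_kermx; apply/eqP/row_matrixP => i; rewrite row_mul row0.
  by apply: kerL; rewrite -row_mul mulmx_ker row0.
have kerG_sub : (kermx G <= kermx L)%MS.
  by rewrite sub_kermx /L !mulmxA mulmx_ker !mul0mx.
have rankL : \rank L = \rank G^T.
  have := eqn_leq (\rank (kermx L)) (\rank (kermx G)); rewrite !mxrankS //.
  rewrite !mxrank_ker mxrank_tr => /eqP/(congr1 (subn m)).
  by rewrite !subKn ?rank_leq_row.
by have [_ <-] := mxrank_leqif_sup (submxMl (G *m diag_mx d) G^T); rewrite rankL.
Qed.

Lemma sum_eq_natr (V : nzRingType) (T : finType) (P : pred T) (e : T) :
  \sum_(y | P y) ((e == y)%:R : V) = (P e)%:R.
Proof.
have [Pe | nPe] := boolP (P e).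
  rewrite (bigD1 e) //= eqxx big1 ?addr0 // => y /andP[_ ye].
  by rewrite eq_sym (negbTE ye).
by apply: big1 => y Py; case: eqP => // ey; rewrite ey Py in nPe.
Qed.

(** * The double of a map *)

Section DoubleMap.
Variables (D : finType) (s : D -> D) (phi : {perm D}).
Hypothesis sK : involutive s.

Local Notation X := (ldart D).
Local Notation same_org := (same_org s phi).
Local Notation lrev := (lrev s).
Local Notation lstar := (lstar s).
Local Notation walk := (walk s phi).

Definition primal (y : X) : bool := if y is inl _ then true else false.

Definition lstarV (y : X) : X := lstar (lrev y).

Lemma face_perm_inj : injective (face_perm s phi).
Proof. by move=> a b /perm_inj /(can_inj sK). Qed.

Lemma lrevK : involutive lrev.
Proof. by case=> d /=; rewrite sK. Qed.

Lemma lrev_inj : injective lrev.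
Proof. exact: inv_inj lrevK. Qed.

Lemma lstar_lstar y : lstar (lstar y) = lrev y.
Proof. by case: y. Qed.

Lemma lstar_lrev y : lstar (lrev y) = lrev (lstar y).
Proof. by case: y. Qed.

Lemma lstarKV : cancel lstarV lstar.
Proof. by move=> y; rewrite /lstarV lstar_lstar lrevK. Qed.

Lemma lstarK : cancel lstar lstarV.
Proof. by move=> y; rewrite /lstarV lstar_lrev lstar_lstar lrevK. Qed.

Lemma lstar_inj : injective lstar.
Proof. exact: can_inj lstarK. Qed.

Lemma lstarV_lrev y : lstarV (lrev y) = lrev (lstarV y).
Proof. by rewrite /lstarV lrevK lstar_lrev lrevK. Qed.

Lemma primal_lrev y : primal (lrev y) = primal y.
Proof. by case: y. Qed.

Lemma primal_lstar y : primal (lstar y) = ~~ primal y.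
Proof. by case: y. Qed.

Lemma primal_lstarV y : primal (lstarV y) = ~~ primal y.
Proof. by rewrite /lstarV primal_lstar primal_lrev. Qed.

Lemma same_org_refl y : same_org y y.
Proof. by case: y => d /=; apply: connect0. Qed.

Lemma same_org_sym y z : same_org y z = same_org z y.
Proof.
by case: y; case: z => d e //=; apply: fconnect_sym;
  [exact: perm_inj | exact: face_perm_inj].
Qed.

Lemma same_org_trans y z w : same_org y z -> same_org z w -> same_org y w.
Proof. by case: y; case: z; case: w => //= a b c; apply: connect_trans. Qed.

Lemma same_org_primal y z : same_org y z -> primal y = primal z.
Proof. by case: y; case: z. Qed.

(* Counterclockwise rotation of the darts of Lambda around their origin. *)
Definition lrot (y : X) : X :=
  match y with inl d => inl (phi d) | inr d => inr (s ((phi^-1)%g d)) end.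

Lemma lrot_inj : injective lrot.
Proof.
move=> [a|a] [b|b] //= [e]; congr (_ _); first exact: perm_inj e.
by move/(can_inj sK)/perm_inj: e.
Qed.

Lemma same_org_lrot y : same_org y (lrot y).
Proof.
case: y => d /=; first exact: fconnect1.
by rewrite sK; have := fconnect1 (face_perm s phi) (s d); rewrite {2}/face_perm sK.
Qed.

(* The dual of the rotated dart starts where the dual of [y] ends: the duals
   of the darts around a vertex are consecutive sides of the dual face. *)
Lemma same_org_lstar_lrot y : same_org (lrev (lstar y)) (lstar (lrot y)).
Proof.
case: y => d /=.
- rewrite sK (fconnect_sym face_perm_inj).
  by have := fconnect1 (face_perm s phi) (s (phi d)); rewrite {2}/face_perm sK permK.
- rewrite !sK (fconnect_sym (@perm_inj _ phi)).
  by have := fconnect1 phi ((phi^-1)%g d); rewrite permKV.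
Qed.

Definition vertex_fun (T : Type) (F : X -> T) : Prop :=
  forall y z, same_org y z -> F y = F z.

Definition coboundary (V : zmodType) (F : X -> V) (y : X) : V := F (lrev y) - F y.

Lemma coboundary_lrev (V : zmodType) (F : X -> V) y :
  coboundary F (lrev y) = - coboundary F y.
Proof. by rewrite /coboundary lrevK opprB. Qed.

Lemma vertex_fun_same_org v : vertex_fun (same_org v).
Proof.
move=> y z yz; apply/idP/idP => h; first exact: same_org_trans h yz.
by apply: same_org_trans h _; rewrite same_org_sym.
Qed.

Lemma sum_vertex_lrot (V : nmodType) v (F : X -> V) :
  \sum_(y | same_org v y) F (lrot y) = \sum_(y | same_org v y) F y.
Proof.
rewrite [RHS](reindex_inj lrot_inj); apply: eq_bigl => y.
by rewrite (vertex_fun_same_org v (same_org_lrot y)).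
Qed.

Lemma coboundary_closed (V : zmodType) (F : X -> V) v : vertex_fun F ->
  \sum_(y | same_org v y) coboundary F (lstar y) = 0.
Proof.
move=> vF; rewrite sumrB.
under eq_bigr do rewrite (vF _ _ (same_org_lstar_lrot _)).
by rewrite (sum_vertex_lrot v (fun y => F (lstar y))) subrr.
Qed.

Lemma sum_mul_vertex_fun_eq0 (V : numFieldType) (F G : X -> V) : vertex_fun G ->
  (forall v, \sum_(y | same_org v y) F y = 0) -> \sum_y F y * G y = 0.
Proof.
move=> vG F0.
pose N (z : X) : V := #|[pred w | same_org z w]|%:R.
have N_neq0 z : N z != 0.
  by rewrite pnatr_eq0 -lt0n; apply/card_gt0P; exists z; apply: same_org_refl.
have vN : vertex_fun N.
  move=> y z yz; congr (_%:R); apply: eq_card => w.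
  by rewrite !inE same_org_sym (vertex_fun_same_org w yz) same_org_sym.
(* Each term is spread evenly over the darts of its vertex, then regrouped. *)
transitivity (\sum_y \sum_(z | same_org y z) F y * G y / N y).
  by apply: eq_bigr => y _; rewrite sumr_const -mulr_natr divfK.
under eq_bigr do rewrite big_mkcond.
rewrite exchange_big /=; apply: big1 => z _.
transitivity (\sum_(y | same_org z y) F y * (G z / N z)).
  rewrite [RHS]big_mkcond; apply: eq_bigr => y _; rewrite same_org_sym.
  by case: ifP => // yz; rewrite (vG _ _ yz) (vN _ _ yz) mulrA.
by rewrite -big_distrl /= F0 mul0r.
Qed.

Lemma sum_mul_coboundary_eq0 (V : numFieldType) (F G : X -> V) :
  (forall y, F (lrev y) = - F y) -> vertex_fun G ->
  (forall v, \sum_(y | same_org v y) F y = 0) ->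
  \sum_y F y * coboundary G y = 0.
Proof.
move=> aF vG F0; have FG0 := sum_mul_vertex_fun_eq0 vG F0.
under eq_bigr do rewrite mulrBr.
rewrite sumrB FG0 subr0 (reindex_inj lrev_inj) /=.
under eq_bigr do rewrite lrevK aF mulNr.
by rewrite sumrN FG0 oppr0.
Qed.

Lemma pairing_coboundary_ge0_eq0 (V : numFieldType) (F G : X -> V) :
  (forall y, F (lrev y) = - F y) -> vertex_fun G ->
  (forall v, \sum_(y | same_org v y) F y = 0) ->
  (forall y, 0 <= F y * coboundary G y) ->
  forall y, F y * coboundary G y = 0.
Proof.
move=> aF vG F0 ge0 y.
by apply: (psumr_eq0P (P := predT) _ (sum_mul_coboundary_eq0 aF vG F0)) => // z _.
Qed.

Lemma walk_same_org_l x x' p y : same_org x x' -> walk x' p y -> walk x p y.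
Proof.
case: p => [|e p] /= xx'; first exact: same_org_trans.
by case/andP=> x'e ->; rewrite (same_org_trans xx' x'e).
Qed.

Lemma walk_same_org_r x p y y' : walk x p y -> same_org y y' -> walk x p y'.
Proof.
elim: p x => [|e p IH] x /=; first exact: same_org_trans.
by case/andP=> -> w yy'; rewrite (IH _ w yy').
Qed.

Lemma walk_cat x p y q z : walk x p y -> walk y q z -> walk x (p ++ q) z.
Proof.
elim: p x => [|e p IH] x /=; first exact: walk_same_org_l.
by case/andP=> -> w w'; rewrite (IH _ w w').
Qed.

Lemma walk_rcons x p y e : walk x p y -> same_org y e -> walk x (rcons p e) (lrev e).
Proof.
by move=> w ye; rewrite -cats1; apply: walk_cat w _; rewrite /= ye same_org_refl.
Qed.

Lemma walk_rev x p y : walk x p y -> walk y (rev (map lrev p)) x.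
Proof.
elim: p x => [|e p IH] x /=; first by rewrite same_org_sym.
case/andP=> xe w; rewrite rev_cons.
by apply: walk_same_org_r (walk_rcons (IH _ w) (same_org_refl _)) _; rewrite lrevK same_org_sym.
Qed.

Lemma walk_primal x p y : walk x p y ->
  primal y = primal x /\ all (fun e => primal e == primal x) p.
Proof.
elim: p x => [|e p IH] x /=; first by move/same_org_primal.
case/andP=> xe /IH[]; rewrite primal_lrev -(same_org_primal xe) => -> ->.
by rewrite eqxx.
Qed.

Lemma walk_mem x p y : walk x p y ->
  forall e, e \in p -> exists2 u, u \in x :: map lrev p & same_org u e.
Proof.
elim: p x => [|e p IH] x //= /andP[xe w] f; rewrite inE => /orP[/eqP->|fp].
  by exists x; rewrite ?mem_head.
by have [u up uf] := IH _ w f fp; exists u; rewrite // inE up orbT.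
Qed.

Lemma sum_coboundary_walk (V : zmodType) (F : X -> V) x p y :
  vertex_fun F -> walk x p y -> \sum_(e <- p) coboundary F e = F y - F x.
Proof.
move=> vF; elim: p x => [|e p IH] x /=.
  by rewrite big_nil => /vF ->; rewrite subrr.
case/andP=> /vF xe /IH IHp; rewrite big_cons IHp xe /coboundary.
by rewrite addrC addrA subrK.
Qed.

Lemma simple_path_first x e p x' y : simple_path s phi x (e :: p) x' ->
  same_org x y -> (y \in e :: p) || (lrev y \in e :: p) -> y = e.
Proof.
case/andP=> /= /andP[_ w] /and3P[/andP[xe x_far] _ _] xy.
have far u : u \in lrev e :: map lrev p -> ~~ same_org u y.
  rewrite inE => /orP[/eqP-> | /(allP x_far)]; [move: xe | ]; apply: contra => uy.
  1,2: by apply: same_org_trans xy _; rewrite same_org_sym.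
rewrite !inE => /orP[/orP[/eqP // | yp] | /orP[/eqP rye | ryp]].
- by have [u /far/negP] := walk_mem w yp.
- by move: (far _ (mem_head _ _)); rewrite -rye lrevK same_org_refl.
- have yp : y \in map lrev p by rewrite -[y]lrevK map_f.
  by move: (far y); rewrite inE yp orbT same_org_refl => /(_ isT).
Qed.

(* A divergence-free flow supported on a simple path vanishes: at the start of
   the path only its first dart carries flow, and we proceed by induction. *)
Lemma flow_on_simple_path_eq0 (V : zmodType) (h : X -> V) x lam x' :
  simple_path s phi x lam x' -> (forall y, h (lrev y) = - h y) ->
  (forall y, y \notin lam -> lrev y \notin lam -> h y = 0) ->
  (forall v, \sum_(y | same_org v y) h y = 0) -> forall y, h y = 0.
Proof.
move=> + ah; elim: lam x => [|e p IH] x sp h0 div; first by move=> y; apply: h0.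
have he : h e = 0.
  have xe : same_org x e by case/andP: sp => /= /andP[].
  rewrite -(div x) (bigD1 e xe) /= big1 ?addr0 // => y /andP[xy ye].
  by apply: h0; apply: contraNN ye => yl; apply/eqP;
    apply: simple_path_first sp xy _; rewrite yl ?orbT.
have sp' : simple_path s phi (lrev e) p x'.
  by case/andP: sp => /= /andP[_ w] /and3P[_ far pw]; rewrite /simple_path w /= far.
apply: IH sp' _ div => y yp ryp.
have [-> // | ye] := eqVneq y e.
have [rye | rye] := eqVneq (lrev y) e; first by rewrite -[y]lrevK ah rye he oppr0.
by apply: h0; rewrite inE negb_or ?ye ?rye.
Qed.

Hypothesis connected : forall d d', connect (fun a b => (b == phi a) || (b == s a)) d d'.

Lemma kind_connected_ind (S : X -> Prop) b :
  (forall z z', same_org z z' -> S z -> S z') ->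
  (forall z, primal z = primal b -> S z -> S (lrev z)) -> S b ->
  forall z, primal z = primal b -> S z.
Proof.
move=> S_org S_rev Sb.
suff D_ind (c : D -> X) : (forall d, S (c d) -> S (c (phi d))) ->
    (forall d, S (c d) -> S (c (s d))) -> forall d0, S (c d0) -> forall d, S (c d).
  case: b S_org S_rev Sb => d0 S_org S_rev Sb [d|d] //= _.
  - apply: (D_ind inl) Sb _ => // a Sa; last exact: (S_rev (inl a)).
    by apply: S_org Sa; apply: fconnect1.
  - apply: (D_ind inr) Sb _ => // a Sa; last exact: (S_rev (inr a)).
    apply: S_org (S_rev (inr a) erefl Sa); rewrite /= sK (fconnect_sym face_perm_inj).
    by have := fconnect1 (face_perm s phi) (s (phi a)); rewrite {2}/face_perm sK permK.
move=> S_phi S_s d0 Sd0 d; have /connectP[pth + ->] := connected d0 d.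
elim: pth d0 Sd0 => [|a pth IH] d0 Sd0 //= /andP[/orP[]/eqP -> ?].
- exact: IH (S_phi _ Sd0) _.
- exact: IH (S_s _ Sd0) _.
Qed.

Section Potential.
Variables (A : pred X) (b : X) (V : zmodType) (om : X -> V).
Hypothesis A_lrev : forall z, A (lrev z) = A z.
Hypothesis om_lrev : forall z, om (lrev z) = - om z.
Hypothesis om_loop : forall g z, walk z g z -> all A g -> \sum_(e <- g) om e = 0.

Definition reachable (z : X) : Prop := exists p, walk b p z && all A p.

(* The junk value [0] is taken at darts not reachable from [b]. *)
Definition potential (z : X) : V :=
  match pselect (reachable z) with
  | left r => \sum_(e <- xchoose r) om e
  | right _ => 0
  end.

Lemma potential_walk p z : walk b p z -> all A p -> potential z = \sum_(e <- p) om e.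
Proof.
move=> w a; rewrite /potential; case: pselect => [r|]; last by case; exists p; rewrite w.
have /andP[w' a'] := xchooseP r; set p' := xchoose r in w' a' *.
have loop : walk b (p' ++ rev (map lrev p)) b by apply: walk_cat w' (walk_rev w).
have Aloop : all A (p' ++ rev (map lrev p)).
  by rewrite all_cat a' all_rev all_map; apply/allP => e ep /=; rewrite A_lrev (allP a).
have := om_loop loop Aloop; rewrite big_cat big_rev big_map /=.
under [X in _ + X]eq_bigr do rewrite om_lrev.
by rewrite sumrN => /eqP; rewrite subr_eq0 => /eqP.
Qed.

Lemma reachable_same_org z z' : reachable z -> same_org z z' -> reachable z'.
Proof. by move=> [p /andP[w a]] zz'; exists p; rewrite (walk_same_org_r w zz'). Qed.

Lemma reachable_step z : reachable z -> A z -> reachable (lrev z).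
Proof.
move=> [p /andP[w a]] Az; exists (rcons p z).
by rewrite (walk_rcons w (same_org_refl z)) all_rcons Az.
Qed.

Lemma vertex_fun_potential : vertex_fun potential.
Proof.
move=> z z' zz'; have [[p /andP[w a]] | nr] := pselect (reachable z).
  by rewrite (potential_walk w a) (potential_walk (walk_same_org_r w zz') a).
have nr' : ~ reachable z'.
  by move=> r; apply: nr; apply: reachable_same_org r _; rewrite same_org_sym.
rewrite /potential; case: pselect => [r|_]; first by case: nr.
by case: pselect => [r|_] //; case: nr'.
Qed.

Lemma coboundary_potential z : reachable z -> A z -> coboundary potential z = om z.
Proof.
move=> [p /andP[w a]] Az; rewrite /coboundary (potential_walk w a).
rewrite (potential_walk (walk_rcons w (same_org_refl z))) ?all_rcons ?Az //.
by rewrite -cats1 big_cat big_seq1 addrC addKr.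
Qed.

End Potential.

(** * The discrete Poisson equation *)

Lemma sum_mul_incidence (V : numFieldType) (F : X -> V) v :
  (forall y, F (lrev y) = - F y) ->
  \sum_y F y * ((same_org v (lrev y))%:R - (same_org v y)%:R) =
  - 2%:R * \sum_(y | same_org v y) F y.
Proof.
move=> aF; under eq_bigr do rewrite mulrBr.
rewrite sumrB (reindex_inj lrev_inj) /=.
under eq_bigr do rewrite lrevK // aF mulNr.
rewrite sumrN -opprD -mulr2n mulNr mulr_natl [X in _ = - (X *+ 2)]big_mkcond /=.
by congr (- (_ *+ 2)); apply: eq_bigr => y _; case: ifP; rewrite ?mulr1 ?mulr0.
Qed.

Lemma poisson_solvable (R : realFieldType) (rho c : X -> R) :
  (forall y, 0 < rho y) -> (forall y, rho (lrev y) = rho y) ->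
  (forall y, c (lrev y) = - c y) ->
  exists U : X -> R, vertex_fun U /\ forall v,
    \sum_(y | same_org v y) rho y * coboundary U y = \sum_(y | same_org v y) c y.
Proof.
move=> rho_gt0 rho_lrev c_lrev.
pose n := #|{: X}|; pose ev : 'I_n -> X := enum_val.
have sum_ev (F : X -> R) : \sum_(j < n) F (ev j) = \sum_y F y.
  by rewrite -(big_enum_val F); apply: eq_bigl => y; rewrite inE.
(* Rows of the incidence matrix are indexed by darts standing for their origin. *)
pose inc : 'M[R]_n :=
  \matrix_(i, j) ((same_org (ev i) (lrev (ev j)))%:R - (same_org (ev i) (ev j))%:R).
have inc_sum (F : X -> R) i : (forall y, F (lrev y) = - F y) ->
    \sum_j F (ev j) * inc i j = - 2%:R * \sum_(y | same_org (ev i) y) F y.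
  move=> aF; under eq_bigr do rewrite mxE.
  by rewrite -sum_mul_incidence // -sum_ev.
have [u cu] : exists u,
    (\row_j c (ev j)) *m inc^T = u *m (inc *m diag_mx (\row_j rho (ev j)) *m inc^T).
  apply/submxP; apply: submx_trans (submxMl _ inc^T) (weighted_gram_row_space _ _).
  by move=> j; rewrite mxE.
pose U (z : X) : R := \sum_i u 0 i * (same_org (ev i) z)%:R.
have vU : vertex_fun U.
  move=> a b ab; apply: eq_bigr => i _.
  by rewrite (vertex_fun_same_org (ev i) ab).
have uinc j : (u *m inc) 0 j = coboundary U (ev j).
  by rewrite mxE /coboundary -sumrB; apply: eq_bigr => i _; rewrite mxE mulrBr.
exists U; split => // v.
have entry (F : X -> R) (M : 'rV_n) : (forall y, F (lrev y) = - F y) ->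
    (forall j, M 0 j = F (ev j)) ->
    (M *m inc^T) 0 (enum_rank v) = - 2%:R * \sum_(y | same_org v y) F y.
  move=> aF MF; rewrite mxE -[v in RHS](enum_rankK v) -inc_sum //.
  by apply: eq_bigr => j _; rewrite MF mxE.
have rhs_entry j : (u *m inc *m diag_mx (\row_j rho (ev j))) 0 j = rho (ev j) * coboundary U (ev j).
  by rewrite mul_mx_diag mxE uinc mxE mulrC.
have rho_dU_lrev y : rho (lrev y) * coboundary U (lrev y) = - (rho y * coboundary U y).
  by rewrite rho_lrev coboundary_lrev // mulrN.
move/(congr1 (fun M : 'rV[R]_n => M 0 (enum_rank v))): cu.
rewrite /= !mulmxA (entry c) // => [|j]; last by rewrite mxE.
rewrite (entry _ _ rho_dU_lrev rhs_entry) => /mulfI -> //.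
by rewrite oppr_eq0 pnatr_eq0.
Qed.

(** * Harmonic cochains *)

Definition restrict (V : zmodType) (k : bool) (F : X -> V) (y : X) : V :=
  if primal y == k then F y else 0.

Lemma restrict_lrev (V : zmodType) k (F : X -> V) :
  (forall y, F (lrev y) = - F y) -> forall y, restrict k F (lrev y) = - restrict k F y.
Proof. by move=> aF y; rewrite /restrict primal_lrev; case: ifP; rewrite ?oppr0. Qed.

Lemma sum_restrict_eq0 (V : zmodType) k (F : X -> V) :
  (forall v, primal v = k -> \sum_(y | same_org v y) F y = 0) ->
  forall v, \sum_(y | same_org v y) restrict k F y = 0.
Proof.
move=> F0 v; have [vk | vk] := eqVneq (primal v) k.
  rewrite -[RHS](F0 v vk); apply: eq_bigr => y vy.
  by rewrite /restrict -(same_org_primal vy) vk eqxx.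
by apply: big1 => y vy; rewrite /restrict -(same_org_primal vy) (negbTE vk).
Qed.

Lemma vertex_fun_reachable A b : vertex_fun (fun z => `[< reachable A b z >]).
Proof.
move=> y z yz; apply/asbool_equiv_eq; split => r; first exact: reachable_same_org r yz.
by apply: reachable_same_org r _; rewrite same_org_sym.
Qed.

(* Dirichlet principle: the energy [sum_y t y * dG y = sum_y w y * (dG y)^2] of
   the flow vanishes by the Green formula [sum_mul_coboundary_eq0]. *)
Lemma weighted_gradient_divfree_eq0 (R : realFieldType) k (w t G : X -> R) :
  (forall y, 0 < w y) -> (forall y, t (lrev y) = - t y) -> vertex_fun G ->
  (forall v, primal v = k -> \sum_(y | same_org v y) t y = 0) ->
  (forall y, primal y = k -> w y * coboundary G y = t y) ->
  forall y, primal y = k -> t y = 0.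
Proof.
move=> w_gt0 t_lrev vG t_div tG.
have energy z : primal z = k -> restrict k t z * coboundary G z = w z * coboundary G z ^+ 2.
  by move=> zk; rewrite /restrict zk eqxx -tG // -mulrA -expr2.
have ge0 z : 0 <= restrict k t z * coboundary G z.
  case: (eqVneq (primal z) k) => [zk | zk]; last by rewrite /restrict (negbTE zk) mul0r.
  by rewrite energy // mulr_ge0 ?sqr_ge0 ?ltW.
move=> y yk; have := pairing_coboundary_ge0_eq0 (restrict_lrev k t_lrev) vG
  (sum_restrict_eq0 t_div) ge0 y.
rewrite energy // => /eqP; rewrite mulf_eq0 (gt_eqF (w_gt0 y)) sqrf_eq0 /= => /eqP dG0.
by rewrite -tG // dG0 mulr0.
Qed.

(* The darts of the kind opposite to [x] whose edges do not cross [lam]: the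
   graph dual to the one of [lam], cut along [lam]. *)
Definition cut_dual (x : X) (lam : seq X) (e : X) : bool :=
  (primal e != primal x) && all (fun l => ~~ dual_edge s e l) lam.

Lemma dual_edge_lrev e l : dual_edge s (lrev e) l = dual_edge s e l.
Proof.
rewrite /dual_edge; apply/orP/orP => -[] /eqP el.
- by right; rewrite -el lrevK.
- by left; rewrite (lrev_inj el).
- by right; rewrite el.
- by left; rewrite el lrevK.
Qed.

Lemma dual_edge_lstar y l : dual_edge s (lstar y) l = (y == l) || (lrev y == l).
Proof.
by rewrite /dual_edge -lstar_lrev // !(inj_eq lstar_inj) (can2_eq lrevK lrevK).
Qed.

Lemma cut_dual_lrev x lam e : cut_dual x lam (lrev e) = cut_dual x lam e.
Proof.
by rewrite /cut_dual primal_lrev; congr (_ && _); apply: eq_all => l; rewrite dual_edge_lrev.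
Qed.

Lemma cut_dual_lstar x lam y : primal y = primal x -> y \notin lam -> lrev y \notin lam ->
  cut_dual x lam (lstar y).
Proof.
move=> yx yl ryl; rewrite /cut_dual primal_lstar yx; apply/andP; split.
  by case: (primal x).
apply/allP => l ll; rewrite dual_edge_lstar negb_or.
by apply/andP; split; [apply: contraNN yl | apply: contraNN ryl] => /eqP ->.
Qed.

Lemma cut_dual_reachable x lam x' : simple_path s phi x lam x' ->
  forall z, primal z = ~~ primal x -> reachable (cut_dual x lam) (lstar x) z.
Proof.
move=> sp; set A := cut_dual x lam; set r := reachable A (lstar x).
pose chi z : int := if `[< r z >] then 1 else 0.
have vchi : vertex_fun chi by move=> y z yz; rewrite /chi (vertex_fun_reachable A (lstar x) yz).
have chi_cut z : A z -> chi (lrev z) = chi z.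
  move=> Az; rewrite /chi; congr (if _ then _ else _); apply/asbool_equiv_eq; split.
  - by move/reachable_step; rewrite lrevK // /r; apply; rewrite /A cut_dual_lrev.
  - by move/reachable_step; apply.
(* The reachable set has no boundary, so its coboundary is a flow along [lam]. *)
have flat : forall y, restrict (primal x) (fun y => coboundary chi (lstar y)) y = 0.
  apply: (flow_on_simple_path_eq0 sp).
  - by apply: restrict_lrev => y; rewrite lstar_lrev // coboundary_lrev.
  - move=> y yl ryl; rewrite /restrict; case: eqP => // yx.
    by rewrite /coboundary chi_cut ?subrr //; apply: cut_dual_lstar.
  - by apply: sum_restrict_eq0 => v _; apply: coboundary_closed.
move=> z; rewrite -(primal_lstar x); move: z.
apply: (kind_connected_ind (S := r)).
- by move=> z z' zz' rz; apply: reachable_same_org rz zz'.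
- move=> z zx rz; move: (flat (lstarV z)).
  rewrite /restrict primal_lstarV zx primal_lstar negbK eqxx lstarKV // /coboundary /chi.
  by case: asboolP => // _; case: asboolP.
- by exists [::]; rewrite /= same_org_refl.
Qed.

Lemma avoids_dual_same_kind x lam x' l : simple_path s phi x lam x' ->
  all (fun e => primal e == primal x) l -> avoids_dual s lam l.
Proof.
move=> sp /allP l_x; have [_ /allP lam_x] := walk_primal (proj1 (andP sp)).
apply/allP => e /l_x /eqP ex; apply/allP => l' /lam_x /eqP l'x.
by apply/norP; split; apply/eqP => /(congr1 primal);
  rewrite ?primal_lrev primal_lstar ex l'x; case: (primal x).
Qed.

Section Weights.
Variables (R : realFieldType) (rho : X -> R).
Hypothesis rho_gt0 : forall y, 0 < rho y.
Hypothesis rho_lrev : forall y, rho (lrev y) = rho y.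

Lemma exact_coclosed_eq0 (b : X) (p : X -> R) : (forall y, p (lrev y) = - p y) ->
  (forall g z, walk z g z -> all (fun e => primal e == primal b) g -> \sum_(e <- g) p e = 0) ->
  (forall v, primal v = primal b -> \sum_(y | same_org v y) rho y * p y = 0) ->
  forall y, primal y = primal b -> p y = 0.
Proof.
move=> p_lrev p_loop p_div.
pose A : pred X := fun e => primal e == primal b.
have A_lrev z : A (lrev z) = A z by rewrite /A primal_lrev.
have reach_b : forall z, primal z = primal b -> reachable A b z.
  apply: (kind_connected_ind (S := reachable A b)).
  - by move=> z z' zz' r; apply: reachable_same_org r zz'.
  - by move=> z zb r; apply: reachable_step r _; rewrite /A zb.
  - by exists [::]; rewrite /= same_org_refl.
have rho_p0 : forall y, primal y = primal b -> rho y * p y = 0.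
  apply: (weighted_gradient_divfree_eq0 (G := potential A b p) rho_gt0) => //.
  - by move=> y; rewrite rho_lrev p_lrev mulrN.
  - exact: vertex_fun_potential.
  by move=> y yb; rewrite coboundary_potential //; [apply: reach_b | rewrite /A yb].
move=> y /rho_p0/eqP; rewrite mulf_eq0 (gt_eqF (rho_gt0 y)) /=.
by move/eqP.
Qed.

Hypothesis rho_lstar : forall y, rho y * rho (lstar y) = 1.

Lemma rho_lstarV y : rho y * rho (lstarV y) = 1.
Proof. by rewrite mulrC -{2}(lstarKV y) rho_lstar. Qed.

Lemma coclosed_dual_coboundary x lam x' (q : X -> R) :
  simple_path s phi x lam x' -> (forall y, q (lrev y) = - q y) ->
  (forall g z, walk z g z -> all (cut_dual x lam) g ->
     \sum_(e <- g) rho (lstarV e) * q (lstarV e) = 0) ->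
  (forall v, primal v = primal x -> \sum_(y | same_org v y) rho y * q y = 0) ->
  exists2 G : X -> R, vertex_fun G &
    forall y, primal y = primal x -> rho y * q y = coboundary G (lstar y).
Proof.
move=> sp q_lrev q_loop q_div.
pose om e := rho (lstarV e) * q (lstarV e).
have om_lrev e : om (lrev e) = - om e by rewrite /om lstarV_lrev // rho_lrev q_lrev mulrN.
have A_lrev := cut_dual_lrev x lam.
set G := potential (cut_dual x lam) (lstar x) om.
have vG : vertex_fun G by apply: vertex_fun_potential.
exists G => // y yx.
suff : restrict (primal x) (fun y => rho y * q y - coboundary G (lstar y)) y = 0.
  by rewrite /restrict yx eqxx => /eqP; rewrite subr_eq0 => /eqP.
apply: (flow_on_simple_path_eq0 sp) => {y yx}.
- apply: restrict_lrev => y.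
  by rewrite rho_lrev q_lrev lstar_lrev coboundary_lrev; ring.
- move=> y yl ryl; rewrite /restrict; case: eqP => // yx.
  have cut_y := cut_dual_lstar yx yl ryl.
  have reach_y : reachable (cut_dual x lam) (lstar x) (lstar y).
    by apply: (cut_dual_reachable sp); rewrite primal_lstar yx.
  by rewrite coboundary_potential // /om lstarK // subrr.
- by apply: sum_restrict_eq0 => v vx; rewrite sumrB q_div // coboundary_closed // subrr.
Qed.

Lemma closed_coclosed_cut_eq0 x lam x' (q : X -> R) :
  simple_path s phi x lam x' -> (forall y, q (lrev y) = - q y) ->
  (forall g z, walk z g z -> all (cut_dual x lam) g ->
     \sum_(e <- g) rho (lstarV e) * q (lstarV e) = 0) ->
  (forall v, primal v = primal x -> \sum_(y | same_org v y) rho y * q y = 0) ->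
  (forall f, primal f != primal x -> \sum_(z | same_org f z) q (lstar z) = 0) ->
  forall y, primal y = primal x -> q y = 0.
Proof.
move=> sp q_lrev q_loop q_div q_closed.
have [G vG qG] := coclosed_dual_coboundary sp q_lrev q_loop q_div.
have qV0 : forall e, primal e = ~~ primal x -> q (lstarV e) = 0.
  apply: (weighted_gradient_divfree_eq0 (w := rho) rho_gt0 _ vG).
  - by move=> e; rewrite lstarV_lrev // q_lrev.
  - move=> f fx; rewrite -[RHS]oppr0 -[in RHS](q_closed f); last by rewrite fx; case: (primal x).
    by rewrite -sumrN; apply: eq_bigr => z _; rewrite /lstarV lstar_lrev q_lrev.
  - move=> e ex; rewrite -[e in coboundary G e](lstarKV e) -qG ?primal_lstarV ?ex ?negbK //.
    by rewrite mulrA rho_lstarV mul1r.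
by move=> y yx; rewrite -(lstarK y) qV0 // primal_lstar yx.
Qed.

End Weights.

End DoubleMap.

Section ComplexFacts.
Variable R : realType.
Local Notation C := (complex R).
Local Notation Re := (@complex.Re R).
Local Notation Im := (@complex.Im R).

Lemma complexP (z w : C) : Re z = Re w -> Im z = Im w -> z = w.
Proof. by case: z; case: w => a b c d /= -> ->. Qed.

Lemma ReD (z w : C) : Re (z + w) = Re z + Re w. Proof. by case: z; case: w. Qed.
Lemma ImD (z w : C) : Im (z + w) = Im z + Im w. Proof. by case: z; case: w. Qed.
Lemma ReN (z : C) : Re (- z) = - Re z. Proof. by case: z. Qed.
Lemma ImN (z : C) : Im (- z) = - Im z. Proof. by case: z. Qed.

Lemma Re_sum I (r : seq I) (P : pred I) (F : I -> C) :
  Re (\sum_(i <- r | P i) F i) = \sum_(i <- r | P i) Re (F i).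
Proof. exact: (big_morph _ ReD (erefl (Re 0))). Qed.

Lemma Im_sum I (r : seq I) (P : pred I) (F : I -> C) :
  Im (\sum_(i <- r | P i) F i) = \sum_(i <- r | P i) Im (F i).
Proof. exact: (big_morph _ ImD (erefl (Im 0))). Qed.

Lemma Re_realCM (r : R) (z : C) : Re (realC r * z) = r * Re z.
Proof. by case: z => a b /=; rewrite mul0r subr0. Qed.

Lemma Im_realCM (r : R) (z : C) : Im (realC r * z) = r * Im z.
Proof. by case: z => a b /=; rewrite mul0r addr0. Qed.

Lemma Re_iCM (z : C) : Re (iC R * z) = - Im z.
Proof. by case: z => a b /=; rewrite mul0r mul1r sub0r. Qed.

Lemma Im_iCM (z : C) : Im (iC R * z) = Re z.
Proof. by case: z => a b /=; rewrite mul0r mul1r add0r. Qed.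

Lemma realCE (r : R) : realC r = real_complex R r. Proof. by []. Qed.

Lemma realCM (a b : R) : realC (a * b) = realC a * realC b.
Proof. by rewrite !realCE rmorphM. Qed.

Lemma realCN (a : R) : realC (- a) = - realC a.
Proof. by rewrite !realCE rmorphN. Qed.

Lemma realC_sum I (r : seq I) (P : pred I) (F : I -> R) :
  realC (\sum_(i <- r | P i) F i) = \sum_(i <- r | P i) realC (F i).
Proof. by rewrite realCE rmorph_sum. Qed.

Lemma realC_eq0 (a : R) : (realC a == 0) = (a == 0).
Proof. by rewrite realCE fmorph_eq0. Qed.

Lemma iC_neq0 : iC R != 0.
Proof. by apply/eqP => /(congr1 Im) /= /eqP; rewrite oner_eq0. Qed.

Lemma iCiC : iC R * iC R = -1.
Proof. by apply: complexP; rewrite /= ?mulr0 ?mul0r ?mulr1 ?mul1r ?sub0r ?addr0 ?oppr0. Qed.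

Lemma two_pi_iE : realC 2 * iC R * realC pi = iC R * realC (2 * pi).
Proof. by rewrite realCM mulrCA mulrA. Qed.

Lemma two_pi_i_neq0 : realC 2 * iC R * realC pi != 0.
Proof.
by rewrite two_pi_iE mulf_neq0 ?iC_neq0 // realC_eq0 mulf_neq0 ?pnatr_eq0 ?gt_eqF ?pi_gt0.
Qed.

End ComplexFacts.

(** * Forms of type (1,0) *)

Section FormOf.
Variables (D : finType) (s : D -> D) (phi : {perm D}).
Hypothesis sK : involutive s.
Variables (R : realType) (rho : ldart D -> R).
Hypothesis rho_lrev : forall y, rho (lrev s y) = rho y.
Hypothesis rho_lstar : forall y, rho y * rho (lstar s y) = 1.

Local Notation X := (ldart D).
Local Notation C := (complex R).
Local Notation I := (iC R).
Local Notation same_org := (same_org s phi).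
Local Notation lrev := (lrev s).
Local Notation lstar := (lstar s).
Local Notation lstarV := (lstarV s).
Local Notation walk := (walk s phi).
Local Notation contour := (contour s phi).

Lemma type10_lstar a : type10 s rho a -> forall w, a (lstar w) = I * realC (rho w) * a w.
Proof.
case=> _ a10 w; move/eqP: (a10 w); rewrite /hodge !mulNr eqr_opp.
move=> /eqP/(congr1 (fun z => realC (rho w) * z)).
by rewrite mulrA -realCM rho_lstar mul1r => ->; rewrite mulrCA mulrA.
Qed.

Lemma contour_type10 a v : type10 s rho a ->
  contour a v = I * \sum_(y | same_org v y) realC (rho y) * a y.
Proof.
by move=> a10; rewrite mulr_sumr; apply: eq_bigr => y _; rewrite type10_lstar // mulrA.
Qed.

Lemma type10_of_lstar a : one_form s a ->
  (forall w, a (lstar w) = I * realC (rho w) * a w) -> type10 s rho a.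
Proof.
move=> a1 a_lstar; split => // w; rewrite /hodge a_lstar.
have rho1 : realC (rho (lstar w)) * realC (rho w) = 1 :> C by rewrite -realCM mulrC rho_lstar.
transitivity (- (realC (rho (lstar w)) * realC (rho w)) * (I * a w)); first ring.
by rewrite rho1 mulN1r mulNr.
Qed.

Variable k : bool.

(* A form of type (1,0) is determined by its values on the darts of one kind
   [k]; [form_of t] is the one extending [t]. *)
Definition form_of (t : X -> C) (y : X) : C :=
  if primal y == k then t y else I * realC (rho (lstarV y)) * t (lstarV y).

Lemma type10_form_of t : (forall y, t (lrev y) = - t y) -> type10 s rho (form_of t).
Proof.
move=> t_lrev; apply: type10_of_lstar => [y | w].
  rewrite /form_of primal_lrev; case: ifP => _; first exact: t_lrev.
  by rewrite lstarV_lrev // rho_lrev t_lrev mulrN.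
rewrite /form_of primal_lstar; have [wk | wk] := eqVneq (primal w) k.
  by rewrite wk lstarK // ifN //; case: k.
have -> : lstar w = lrev (lstarV w) by rewrite /lstarV lstar_lrev lrevK.
rewrite ifT; last by move: wk; case: (primal w); case: k.
rewrite t_lrev mulrA mulrACA iCiC -realCM (rho_lstarV sK rho_lstar).
by rewrite mulN1r mulNr mul1r.
Qed.

Lemma contour_form_of t v : primal v = k ->
  contour (form_of t) v = I * \sum_(y | same_org v y) realC (rho y) * t y.
Proof.
move=> vk; rewrite /contour mulr_sumr; apply: eq_bigr => y vy.
by rewrite /form_of primal_lstar -(same_org_primal vy) vk lstarK // mulrA; case: k.
Qed.

Lemma contour_form_of_dual t f : primal f != k ->
  contour (form_of t) f = \sum_(z | same_org f z) t (lstar z).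
Proof.
move=> fk; apply: eq_bigr => z fz.
by rewrite /form_of primal_lstar -(same_org_primal fz); move: fk; case: (primal f); case: k.
Qed.

Lemma holonomy_form_of t g z : walk z g z -> primal z = k ->
  holonomy (form_of t) g = \sum_(e <- g) t e.
Proof.
move=> /walk_primal[_ /allP gz] zk; rewrite /holonomy !big_seq; apply: eq_bigr => e /gz /eqP ez.
by rewrite /form_of ez zk eqxx.
Qed.

Lemma holonomy_form_of_dual t g z : walk z g z -> primal z != k ->
  holonomy (form_of t) g = \sum_(e <- g) I * realC (rho (lstarV e)) * t (lstarV e).
Proof.
move=> /walk_primal[_ /allP gz] zk; rewrite /holonomy !big_seq; apply: eq_bigr => e /gz /eqP ez.
by rewrite /form_of ez (negbTE zk).
Qed.

End FormOf.

Section Linearity.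
Variables (D : finType) (s : D -> D) (phi : {perm D}) (R : realType) (rho : ldart D -> R).
Local Notation X := (ldart D).
Local Notation C := (complex R).

Lemma type10B (a b : X -> C) : type10 s rho a -> type10 s rho b -> type10 s rho (a \- b).
Proof.
move=> [a1 a10] [b1 b10]; split => y /=; first by rewrite a1 b1 opprD.
by move: (a10 y) (b10 y); rewrite /hodge /= mulrBr => -> ->; rewrite mulrBr.
Qed.

Lemma type10Ml (c : C) (a : X -> C) : type10 s rho a -> type10 s rho (c \*o a).
Proof.
move=> [a1 a10]; split => y /=; first by rewrite a1 mulrN.
by move: (a10 y); rewrite /hodge /= mulrCA => ->; rewrite mulrCA.
Qed.

Lemma contourB (a b : X -> C) v : contour s phi (a \- b) v = contour s phi a v - contour s phi b v.
Proof. exact: sumrB. Qed.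

Lemma contourMl (c : C) (a : X -> C) v : contour s phi (c \*o a) v = c * contour s phi a v.
Proof. by rewrite /contour mulr_sumr. Qed.

Lemma holonomyB (a b : X -> C) g : holonomy (a \- b) g = holonomy a g - holonomy b g.
Proof. exact: sumrB. Qed.

Lemma holonomyMl (c : C) (a : X -> C) g : holonomy (c \*o a) g = c * holonomy a g.
Proof. by rewrite /holonomy mulr_sumr. Qed.

End Linearity.

(** * The forms alpha and beta *)

Section DipoleForms.
Variables (D : finType) (s : D -> D) (phi : {perm D}).
Hypothesis sK : involutive s.
Hypothesis connected : forall d d', connect (fun a b => (b == phi a) || (b == s a)) d d'.
Variables (R : realType) (rho : ldart D -> R).
Hypothesis rho_gt0 : forall y, 0 < rho y.
Hypothesis rho_lrev : forall y, rho (lrev s y) = rho y.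
Hypothesis rho_lstar : forall y, rho y * rho (lstar s y) = 1.

Local Notation X := (ldart D).
Local Notation C := (complex R).
Local Notation I := (iC R).
Local Notation Re := (@complex.Re R).
Local Notation Im := (@complex.Im R).
Local Notation same_org := (same_org s phi).
Local Notation lrev := (lrev s).
Local Notation lstar := (lstar s).
Local Notation lstarV := (lstarV s).
Local Notation walk := (walk s phi).
Local Notation contour := (contour s phi).
Local Notation residue := (residue s phi).
Local Notation coboundary := (coboundary s).

Variables (x x' : X) (lam : seq X).
Hypothesis x_lam_x' : simple_path s phi x lam x'.
Hypothesis x_x' : ~~ same_org x x'.

Local Notation poles := (fun y => same_org x y || same_org x' y).
Local Notation form_of := (form_of s rho (primal x)).

Lemma primal_x' : primal x' = primal x.
Proof. by have [] := walk_primal (proj1 (andP x_lam_x')). Qed.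

Lemma meromorphic_of_contour a (Q : Prop) : type10 s rho a ->
  (forall v, primal v = primal x ->
     contour a v = I * realC (2 * pi * ((same_org v x)%:R - (same_org v x')%:R))) ->
  (forall f, primal f != primal x -> contour a f = 0) -> Q ->
  [/\ meromorphic s phi rho poles a, residue a x = 1, residue a x' = -1 & Q].
Proof.
move=> a10 a_kind a_dual HQ.
have res v : primal v = primal x ->
    residue a v = realC ((same_org v x)%:R - (same_org v x')%:R).
  by move=> vx; rewrite /residue a_kind // realCM mulrA -two_pi_iE mulKf ?two_pi_i_neq0.
have x'x : same_org x' x = false by rewrite same_org_sym // (negbTE x_x').
split; last 3 first.
- by rewrite res // same_org_refl (negbTE x_x') subr0.
- by rewrite res ?primal_x' // same_org_refl x'x sub0r realCN.
- by [].
split => //; split => [y | y poles_y]; rewrite /closed_at.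
  rewrite negb_or => /andP[xy x'y].
  have [yx | yx] := eqVneq (primal y) (primal x); last exact: a_dual.
  by rewrite a_kind // !(same_org_sym phi sK y) (negbTE xy) (negbTE x'y) subrr mulr0 mulr0.
have yx : primal y = primal x.
  by case/orP: poles_y => /same_org_primal <- //; rewrite primal_x'.
rewrite a_kind // => /eqP; rewrite mulf_eq0 (negbTE (iC_neq0 R)) realC_eq0 /=.
rewrite !mulf_eq0 pnatr_eq0 (gt_eqF (pi_gt0 R)) /= subr_eq0 !(same_org_sym phi sK y).
have x_x'_y : ~~ (same_org x y && same_org x' y).
  by apply: contra x_x' => /andP[xy x'y]; rewrite (same_org_trans xy) // same_org_sym.
case/orP: poles_y x_x'_y => -> /=.
  by case: (same_org x' y) => //= _; rewrite oner_eq0.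
by case: (same_org x y) => //= _; rewrite eq_sym oner_eq0.
Qed.

(* [path_flux] is [2 pi] times the unit current flowing along [lam]. *)
Definition path_flux (y : X) : R :=
  2 * pi * \sum_(e <- lam) ((e == y)%:R - (e == lrev y)%:R).

Lemma path_flux_lrev y : path_flux (lrev y) = - path_flux y.
Proof.
rewrite /path_flux -mulrN -sumrN; congr (_ * _); apply: eq_bigr => e _.
by rewrite lrevK // opprB.
Qed.

Lemma path_flux_div v :
  \sum_(y | same_org v y) path_flux y = 2 * pi * ((same_org v x)%:R - (same_org v x')%:R).
Proof.
rewrite -mulr_sumr exchange_big /=; congr (_ * _).
transitivity (\sum_(e <- lam) coboundary (fun z => - ((same_org v z)%:R : R)) e).
  apply: eq_bigr => e _; rewrite sumrB !sum_eq_natr /coboundary opprK addrC.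
  congr (- _ + _); rewrite -sum_eq_natr; apply: eq_bigr => y _.
  by rewrite (can2_eq (lrevK sK) (lrevK sK)).
rewrite (sum_coboundary_walk _ (proj1 (andP x_lam_x'))) ?opprK 1?addrC //.
by move=> y z yz; rewrite (vertex_fun_same_org sK v yz).
Qed.

Lemma path_flux_cut e : all (fun l => ~~ dual_edge s e l) lam -> path_flux (lstarV e) = 0.
Proof.
move=> e_cut; rewrite /path_flux big_seq big1 ?mulr0 // => l ll.
move: (allP e_cut l ll); rewrite -{1}(lstarKV sK e) (dual_edge_lstar sK) negb_or.
by case/andP => /negbTE yl /negbTE ryl; rewrite eq_sym yl eq_sym ryl subrr.
Qed.

Definition alpha_spec (a : X -> C) : Prop :=
  [/\ meromorphic s phi rho poles a, residue a x = 1, residue a x' = -1 &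
    forall g, loop s phi g -> avoids_dual s lam g -> Re (holonomy a g) = 0].

Definition beta_spec (b : X -> C) : Prop :=
  [/\ meromorphic s phi rho poles b, residue b x = 1, residue b x' = -1 &
    forall g, loop s phi g -> avoids_dual s lam g -> Im (holonomy b g) = 0].

Lemma exists_alpha : exists a, alpha_spec a.
Proof.
have [U [vU U_div]] := poisson_solvable phi sK rho_gt0 rho_lrev path_flux_lrev.
pose t y := realC (coboundary U y).
have t_lrev y : t (lrev y) = - t y by rewrite /t coboundary_lrev // realCN.
exists (form_of t); apply: meromorphic_of_contour; first exact: type10_form_of.
- move=> v vx; rewrite contour_form_of // -path_flux_div -U_div realC_sum.
  by congr (_ * _); apply: eq_bigr => y _; rewrite realCM.
- by move=> f fx; rewrite contour_form_of_dual // -realC_sum coboundary_closed.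
move=> g [z w] _; have [zx | zx] := eqVneq (primal z) (primal x).
  by rewrite (holonomy_form_of _ _ w zx) -realC_sum (sum_coboundary_walk _ w) // subrr.
rewrite (holonomy_form_of_dual _ _ w zx) Re_sum big1 // => e _.
by rewrite -mulrA Re_iCM -realCM oppr0.
Qed.

Lemma exists_beta : exists b, beta_spec b.
Proof.
pose c z := rho z * path_flux (lstar z).
have c_lrev z : c (lrev z) = - c z by rewrite /c lstar_lrev path_flux_lrev rho_lrev mulrN.
have [G [vG G_div]] := poisson_solvable phi sK rho_gt0 rho_lrev c_lrev.
(* The flux along [lam] corrected by a gradient so as to be closed on dual faces. *)
pose t y := realC (rho (lstar y) * (path_flux y + coboundary G (lstar y))).
have t_lrev y : t (lrev y) = - t y.
  by rewrite /t lstar_lrev rho_lrev path_flux_lrev (coboundary_lrev sK) -realCN -opprD mulrN.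
exists (form_of t); apply: meromorphic_of_contour; first exact: type10_form_of.
- move=> v vx; rewrite contour_form_of // -path_flux_div.
  have -> : \sum_(y | same_org v y) path_flux y =
      \sum_(y | same_org v y) (path_flux y + coboundary G (lstar y)).
    by rewrite big_split /= coboundary_closed // addr0.
  rewrite realC_sum; congr (_ * _); apply: eq_bigr => y _.
  by rewrite -realCM mulrA rho_lstar mul1r.
- move=> f fx; rewrite contour_form_of_dual //.
  transitivity (realC (\sum_(z | same_org f z) (c z - rho z * coboundary G z))).
    rewrite realC_sum; apply: eq_bigr => z _.
    by rewrite /t lstar_lstar rho_lrev (coboundary_lrev sK) /c; congr realC; ring.
  by rewrite sumrB G_div subrr.
move=> g [z w] g_cut; have [zx | zx] := eqVneq (primal z) (primal x).
  by rewrite (holonomy_form_of _ _ w zx) Im_sum big1.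
rewrite (holonomy_form_of_dual _ _ w zx) Im_sum.
transitivity (\sum_(e <- g) coboundary G e); last by rewrite (sum_coboundary_walk _ w) ?subrr.
rewrite !big_seq; apply: eq_bigr => e eg.
rewrite -mulrA Im_iCM -realCM /= /t lstarKV // mulrA.
rewrite -[X in _ * rho X](lstarKV sK e) rho_lstar mul1r.
by rewrite path_flux_cut ?add0r //; apply: (allP g_cut e eg).
Qed.

Lemma holomorphic_Re_periods_eq0 (g : X -> C) : type10 s rho g ->
  (forall v, contour g v = 0) ->
  (forall l, loop s phi l -> avoids_dual s lam l -> Re (holonomy g l) = 0) ->
  forall y, g y = 0.
Proof.
move=> g10 g_closed g_periods.
have g_lstar := type10_lstar rho_lstar g10.
have g_lrev : forall y, g (lrev y) = - g y by case: g10.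
have contourE v := contour_type10 phi rho_lstar v g10.
have Re_loop l z : walk z l z -> all (fun e => primal e == primal x) l ->
    \sum_(e <- l) Re (g e) = 0.
  move=> w l_x; rewrite -Re_sum; apply: g_periods; first by exists z.
  exact: avoids_dual_same_kind x_lam_x' l_x.
have Re0 : forall y, primal y = primal x -> Re (g y) = 0.
  apply: (exact_coclosed_eq0 sK connected rho_gt0 rho_lrev) Re_loop _.
    by move=> y; rewrite g_lrev ReN.
  move=> v _; have := congr1 Im (g_closed v); rewrite contourE Im_iCM Re_sum.
  by under eq_bigr do rewrite Re_realCM.
have Im0 : forall y, primal y = primal x -> Im (g y) = 0.
  apply: (closed_coclosed_cut_eq0 sK connected rho_gt0 rho_lrev rho_lstar x_lam_x').
  - by move=> y; rewrite g_lrev ImN.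
  - move=> l z w l_cut; have av : avoids_dual s lam l.
      by apply/allP => e /(allP l_cut) /andP[].
    have := g_periods l (ex_intro _ z w) av; rewrite Re_sum.
    under eq_bigr => e _ do rewrite -[e in g e](lstarKV sK e) g_lstar -mulrA Re_iCM Im_realCM.
    by rewrite sumrN => /eqP; rewrite oppr_eq0 => /eqP.
  - move=> v _; have := congr1 Re (g_closed v); rewrite contourE Re_iCM Im_sum.
    under eq_bigr do rewrite Im_realCM.
    by move/eqP; rewrite oppr_eq0 => /eqP.
  - by move=> f _; have := congr1 Im (g_closed f); rewrite Im_sum.
have g0 y : primal y = primal x -> g y = 0 by move=> yx; apply: complexP; rewrite ?Re0 ?Im0.
move=> y; have [yx | yx] := eqVneq (primal y) (primal x); first exact: g0.
rewrite -(lstarKV sK y) g_lstar g0 ?mulr0 // primal_lstarV.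
by move: yx; case: (primal y); case: (primal x).
Qed.

Lemma contour_same_org (a : X -> C) u v : same_org u v -> contour a u = contour a v.
Proof.
move=> uv; apply: eq_bigl => y.
by rewrite !(same_org_sym phi sK _ y) (vertex_fun_same_org sK y uv).
Qed.

Lemma meromorphicB_closed (a b : X -> C) :
  meromorphic s phi rho poles a -> meromorphic s phi rho poles b ->
  residue a x = residue b x -> residue a x' = residue b x' ->
  forall v, contour (a \- b) v = 0.
Proof.
move=> [_ [a_closed _]] [_ [b_closed _]] res_x res_x' v; rewrite contourB.
have contourE c u : contour c u = realC 2 * I * realC pi * residue c u.
  by rewrite /residue mulrA mulfV ?mul1r ?two_pi_i_neq0.
have [/orP[xv | x'v] | nv] := boolP (poles v); last by rewrite a_closed ?b_closed ?subrr.
- by rewrite -!(contour_same_org _ xv) !contourE res_x subrr.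
- by rewrite -!(contour_same_org _ x'v) !contourE res_x' subrr.
Qed.

Lemma alpha_spec_unique a a' : alpha_spec a -> alpha_spec a' -> a = a'.
Proof.
move=> [ma a_x a_x' a_per] [ma' a'_x a'_x' a'_per]; apply/funext => y.
apply/eqP; rewrite -subr_eq0; apply/eqP; move: y.
apply: (holomorphic_Re_periods_eq0 (g := a \- a')).
- exact: type10B (proj1 ma) (proj1 ma').
- by apply: meromorphicB_closed; rewrite ?a_x ?a'_x ?a_x' ?a'_x'.
- by move=> l l_loop l_av; rewrite holonomyB ReD ReN a_per // a'_per // subrr.
Qed.

(* [b - b'] has real periods, so [i (b - b')] falls under the uniqueness of alpha. *)
Lemma beta_spec_unique b b' : beta_spec b -> beta_spec b' -> b = b'.
Proof.
move=> [mb b_x b_x' b_per] [mb' b'_x b'_x' b'_per].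
suff ib0 : forall y, (I \*o (b \- b')) y = 0.
  apply/funext => y; apply/eqP; rewrite -subr_eq0.
  by move/eqP: (ib0 y); rewrite mulf_eq0 (negbTE (iC_neq0 R)).
apply: holomorphic_Re_periods_eq0.
- exact: type10Ml (type10B (proj1 mb) (proj1 mb')).
- by move=> v; rewrite contourMl meromorphicB_closed ?mulr0 // ?b_x ?b'_x ?b_x' ?b'_x'.
- move=> l l_loop l_av; rewrite holonomyMl Re_iCM holonomyB ImD ImN.
  by rewrite b_per // b'_per // subrr oppr0.
Qed.

End DipoleForms.

Theorem mainTheorem9 (R : realType) (D : finType) (s : D -> D) (phi : {perm D})
  (rho : ldart D -> R)
  (Hmap : is_cellular_map s phi)
  (Hrho : conformal_structure s rho)
  (x x' : ldart D) (lam : seq (ldart D))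
  (Hlam : simple_path s phi x lam x')
  (Hxx' : ~~ same_org s phi x x') :
  let P := fun y => same_org s phi x y || same_org s phi x' y in
  exists! ab : (ldart D -> complex R) * (ldart D -> complex R),
    [/\ meromorphic s phi rho P ab.1,
        residue s phi ab.1 x = 1, residue s phi ab.1 x' = -1 &
        (forall g, loop s phi g -> avoids_dual s lam g ->
           complex.Re (holonomy ab.1 g) = 0)] /\
    [/\ meromorphic s phi rho P ab.2,
        residue s phi ab.2 x = 1, residue s phi ab.2 x' = -1 &
        (forall g, loop s phi g -> avoids_dual s lam g ->
           complex.Im (holonomy ab.2 g) = 0)].
Proof.
case: Hmap Hrho => sK [_ connected] [rho_lrev [rho_gt0 rho_lstar]] P.
have [a alpha_a] := exists_alpha sK rho_gt0 rho_lrev rho_lstar Hlam Hxx'.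
have [b beta_b] := exists_beta sK rho_gt0 rho_lrev rho_lstar Hlam Hxx'.
exists (a, b); split => // -[a' b'] /= [alpha_a' beta_b'].
have unique_alpha := alpha_spec_unique sK connected rho_gt0 rho_lrev rho_lstar Hlam.
have unique_beta := beta_spec_unique sK connected rho_gt0 rho_lrev rho_lstar Hlam.
by rewrite (unique_alpha _ _ alpha_a alpha_a') (unique_beta _ _ beta_b beta_b').
Qed.
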